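(* Let $t$ be a positive integer not divisible by $3$. Then the average size of a $(3,t)$-core is $\frac{(t+4)\cdot 2\cdot (t-1)}{24}=\frac{(t+4)(t-1)}{12}$. Equivalently, the sum of the sizes of all $(3,t)$-cores equals $$\frac{(t+4)\cdot 2\cdot (t-1)}{24(t+3)}\binom{t+3}{3}.$$
   Context: A partition $\lambda=(\lambda_1,\dots,\lambda_m)$ is a weakly decreasing sequence of positive integers. Its size is $\lambda_1+\dots+\lambda_m$. The hook length of a cell $B$ of the Young diagram is the number of cells directly to the right of $B$ in its row or directly below $B$ in its column, including $B$ itself. $\lambda$ is an $s$-core if no cell has hook length equal to $s$. An $(s,t)$-core is a partition that is both an $s$-core and a $t$-core. For coprime $s,t$ there are exactly $\binom{s+t}{s}/(s+t)$ $(s,t)$-cores, so in particular finitely many. *)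

From HB Require Import structures.
From mathcomp Require Import all_boot all_order all_algebra.
Set Implicit Arguments. Unset Strict Implicit. Unset Printing Implicit Defensive.

Definition is_partition (la : seq nat) : bool :=
  sorted geq la && all (fun x => 0 < x) la.

Definition psize (la : seq nat) : nat := sumn la.

Definition col_len (la : seq nat) (j : nat) : nat := count (fun x => j < x) la.

(* hook length of the cell in row i, column j (0-indexed):
   arm = la_i - j - 1 cells to the right, leg = col_len j - i - 1 cells below,
   plus the cell itself. *)
Definition hook (la : seq nat) (i j : nat) : nat :=
  (nth 0 la i - j - 1) + (col_len la j - i - 1) + 1.

Definition is_cell (la : seq nat) (i j : nat) : bool :=
  (i < size la) && (j < nth 0 la i).

Definition is_core (s : nat) (la : seq nat) : bool :=
  all (fun i => all (fun j => hook la i j != s) (iota 0 (nth 0 la i)))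
      (iota 0 (size la)).

Definition is_core2 (s t : nat) (la : seq nat) : bool :=
  [&& is_partition la, is_core s la & is_core t la].

From HB Require Import structures.
From mathcomp Require Import all_boot all_order all_algebra.
From mathcomp Require Import zify ring lra.
Import GRing.Theory Num.Theory.
Set Implicit Arguments. Unset Strict Implicit. Unset Printing Implicit Defensive.

(* A partition la = (la_1 >= ... >= la_m) is encoded by its
   beta-set {la_i + m - i} of first-column hook lengths.  The hook lengths of
   la are exactly the differences h - g with h in the beta-set and g < h a
   gap (non-member), so la is an s-core iff its beta-set is closed under
   h |-> h - s (coreP).  A 3-closed beta-set avoiding 0 consists of two runs
   {3q+1 : q < a} and {3q+2 : q < b}; this gives a bijection (a, b) |-> core3 a b
   onto the 3-cores, with |core3 a b| = a^2 - ab + b^2 + b.  For t = 3k+1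
   (resp. 3k+2) the runs set is t-closed iff a <= k, b <= a+k (resp. b <= k,
   a <= b+k+1).  Summing a^2 - ab + b^2 + b over these triangular regions of
   parameters by antidifferences yields the count (t+1)(t+2)/6 and the total
   size (t+4)(t-1)(t+1)(t+2)/72, from which the theorem is simple algebra. *)

(* The beta-set of la = (la_1 >= ... >= la_m) lists the first-column hook
   lengths la_i + (m - i), in decreasing order; unbeta inverts it. *)
Fixpoint beta (la : seq nat) : seq nat :=
  if la is x :: l then (x + size l) :: beta l else [::].

Fixpoint unbeta (H : seq nat) : seq nat :=
  if H is h :: l then (h - size l) :: unbeta l else [::].

Lemma size_beta la : size (beta la) = size la.
Proof. by elim: la => //= x l ->. Qed.

Lemma size_unbeta H : size (unbeta H) = size H.
Proof. by elim: H => //= x l ->. Qed.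

Lemma betaK : cancel beta unbeta.
Proof. by elim=> //= x l ->; rewrite size_beta addnK. Qed.

Lemma nth_beta la i : i < size la ->
  nth 0 (beta la) i = nth 0 la i + (size la - 1 - i).
Proof. by elim: la i => //= x l IH [|i] /= Hi; [lia | rewrite IH //; lia]. Qed.

(* Summing the beta-set: sum beta = |la| + m(m-1)/2, written without division. *)
Lemma sumn_beta la :
  sumn (beta la) * 2 + size la = sumn la * 2 + size la * size la.
Proof. by elim: la => //= x l IH; nia. Qed.

Lemma ltn_nth_count (s : seq nat) y r : sorted geq s -> r < size s ->
  (y < nth 0 s r) = (r < count (fun x => y < x) s).
Proof.
elim: s r => //= x l IH r Hs Hr.
have Hall : all (geq x) l := order_path_min (rev_trans leq_trans) Hs.
case Hyx: (y < x).
  case: r Hr => [|r] Hr /=; first by rewrite add1n.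
  by rewrite IH ?(path_sorted Hs) // add1n ltnS.
have -> : count (fun x => y < x) l = 0.
  apply/eqP; rewrite -leqn0 leqNgt -has_count; apply/hasPn => z /(allP Hall) /=.
  by move/negbT: Hyx; lia.
case: r Hr => [|r] //= Hr.
have := (all_nthP 0 Hall) r Hr; move/negbT: Hyx => /=; lia.
Qed.

Lemma eq_from_ltn m x y : (forall r, r < m -> (r < x) = (r < y)) ->
  x <= m -> y <= m -> x = y.
Proof.
move=> Hxy Hx Hy; case: (ltngtP x y) => // H.
- by have := Hxy x (leq_trans H Hy); rewrite ltnn H.
- by have := Hxy y (leq_trans H Hx); rewrite ltnn H.
Qed.

Section Partition.
Variable la : seq nat.
Hypothesis la_part : is_partition la.

Lemma partition_nth_mono r r' : r <= r' -> r' < size la ->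
  nth 0 la r' <= nth 0 la r.
Proof.
case/andP: la_part => la_sorted _ Hrr Hr'.
apply: (sorted_leq_nth (rev_trans leq_trans) (@leqnn) 0 la_sorted) => //.
by rewrite inE; lia.
Qed.

Lemma partition_nth_pos r : r < size la -> 0 < nth 0 la r.
Proof. by case/andP: la_part => _ /(all_nthP 0); apply. Qed.

Lemma ltn_col_len i j : i < size la -> (j < nth 0 la i) = (i < col_len la j).
Proof. by case/andP: la_part => la_sorted _; apply: ltn_nth_count. Qed.

Lemma sorted_beta : sorted gtn (beta la).
Proof.
apply/(sortedP 0) => i; rewrite size_beta => Hi.
rewrite !nth_beta //; last lia.
by have := partition_nth_mono (leqnSn i) Hi; lia.
Qed.

Lemma zero_notin_beta : 0 \notin beta la.
Proof.
apply/negP => /(nthP 0) [r]; rewrite size_beta => Hr.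
by rewrite nth_beta //; have := partition_nth_pos Hr; lia.
Qed.

(* Column j contributes the "gap" m - col_len j + j to the complement of the
   beta-set; the hook length of (i, j) is the difference beta_i - gap j. *)
Definition gap j := size la - col_len la j + j.

Lemma hook_beta i j : i < size la -> j < nth 0 la i ->
  hook la i j + gap j = nth 0 (beta la) i.
Proof.
move=> Hi Hj; have Hc : i < col_len la j by rewrite -ltn_col_len.
have := count_size (fun x => j < x) la.
by rewrite nth_beta // /hook /gap -/(col_len la j); lia.
Qed.

Lemma gap_notin_beta j : gap j \notin beta la.
Proof.
apply/negP => /(nthP 0) [r]; rewrite size_beta => Hr.
have := count_size (fun x => j < x) la; have := ltn_col_len j Hr.
rewrite nth_beta // /gap -/(col_len la j).
by case: (ltnP j (nth 0 la r)) => ? /esym; [move/idP | move/negbT]; lia.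
Qed.

(* Conversely, every non-member k of the beta-set lying below some beta_i is
   the gap of a column j crossing row i: that column is k + p - m, where p
   counts the beta-numbers above k. *)
Lemma gap_below_beta k i : k \notin beta la -> i < size la ->
  k < nth 0 (beta la) i -> exists2 j, j < nth 0 la i & gap j = k.
Proof.
move=> Hk Hi Hki.
pose p := count (fun x => k < x) (beta la).
have beta_gt r : r < size la -> (k < nth 0 (beta la) r) = (r < p).
  by move=> Hr; apply: ltn_nth_count; rewrite ?size_beta //;
     apply: sub_sorted sorted_beta => x y /= /ltnW.
have beta_neq r : r < size la -> nth 0 (beta la) r != k.
  by move=> Hr; apply: contraNneq Hk => <-; rewrite mem_nth // size_beta.
have p_le_m : p <= size la by rewrite -(size_beta la) count_size.
have i_lt_p : i < p by rewrite -beta_gt.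
have rows r : r < size la -> (k + p - size la < nth 0 la r) = (r < p).
  move=> Hr; case: (ltnP r p) => Hrp.
  - have Hp1 : p.-1 < size la by lia.
    have : k < nth 0 (beta la) p.-1 by rewrite beta_gt //; lia.
    have := partition_nth_mono (_ : r <= p.-1) Hp1.
    have := partition_nth_pos Hr.
    by rewrite nth_beta // => ? ? ?; apply/idP; lia.
  - have Hpm : p < size la by lia.
    have := beta_gt _ Hpm; have := beta_neq _ Hpm; rewrite !nth_beta // ltnn.
    by have := partition_nth_mono Hrp Hr => ? ? ?; apply/negbTE; lia.
have k_large : size la <= k + p.
  case: (ltnP p (size la)) => Hpm; last lia.
  have := beta_gt _ Hpm; have := beta_neq _ Hpm; rewrite !nth_beta // ltnn.
  have := partition_nth_pos Hpm; lia.
have col : col_len la (k + p - size la) = p.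
  apply: (@eq_from_ltn (size la)); [|exact: count_size|exact: p_le_m].
  by move=> r Hr; rewrite -ltn_col_len // rows.
by exists (k + p - size la); [rewrite rows | rewrite /gap col; lia].
Qed.

End Partition.

Definition closed (s : nat) (H : seq nat) :=
  forall h, h \in H -> s <= h -> h - s \in H.

(* A partition is an s-core exactly when its beta-set is closed under
   s-descent: a hook of length s is a pair (beta_i, gap j) at distance s. *)
Lemma coreP s la : is_partition la -> is_core s la <-> closed s (beta la).
Proof.
move=> Hp; split => [Hcore h /(nthP 0) [i] | Hc].
- rewrite size_beta => Hi <- Hsh; apply: contraT => Hn.
  have Hs : 0 < s.
    by apply: contraTT Hn; rewrite lt0n negbK => /eqP->; rewrite subn0 mem_nth // size_beta.
  have Hlt : nth 0 (beta la) i - s < nth 0 (beta la) i.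
    by rewrite ltn_subrL Hs (leq_trans Hs Hsh).
  have [j Hj Ej] := gap_below_beta Hp Hn Hi Hlt.
  have Hhs : hook la i j = s.
    by apply/eqP; rewrite -(eqn_add2r (gap la j)) hook_beta // Ej subnKC.
  move/allP: Hcore => /(_ i); rewrite mem_iota Hi => /(_ isT) /allP /(_ j).
  by rewrite mem_iota Hj Hhs eqxx => /(_ isT).
- apply/allP => i; rewrite mem_iota => /andP[_ Hi].
  apply/allP => j; rewrite mem_iota => /andP[_ Hj]; apply/eqP => Hh.
  have E := hook_beta Hp Hi Hj; rewrite Hh in E.
  have Hin : nth 0 (beta la) i \in beta la by rewrite mem_nth // size_beta.
  have := Hc _ Hin; rewrite -E addKn => /(_ (leq_addr _ _)).
  by rewrite (negbTE (gap_notin_beta _ _)).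
Qed.

Lemma sorted_gtn_staircase (H : seq nat) i : sorted gtn H ->
  all (fun x => 0 < x) H -> i < size H -> size H - i <= nth 0 H i.
Proof.
elim: H i => //= x l IH [|i] Hs /andP[Hx Hl] Hi /=; last first.
  by rewrite subSS; apply: IH (path_sorted Hs) Hl Hi.
case: l IH Hs Hl {Hi} => [|y l] IH Hs Hl /=; first by rewrite subn0.
by have := IH 0 (path_sorted Hs) Hl (ltn0Sn _); move: Hs => /= /andP[? _]; lia.
Qed.

Lemma nth_unbeta H i : i < size H ->
  nth 0 (unbeta H) i = nth 0 H i - (size H - 1 - i).
Proof. by elim: H i => //= x l IH [|i] /= Hi; [lia | rewrite IH //; lia]. Qed.

Lemma unbetaK H : sorted gtn H -> all (fun x => 0 < x) H -> beta (unbeta H) = H.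
Proof.
elim: H => //= h l IH Hs Hpos; move: (Hpos) => /andP[_ Hl].
rewrite IH ?(path_sorted Hs) // size_unbeta subnK //.
by have := sorted_gtn_staircase (Hs : sorted gtn (h :: l)) Hpos (ltn0Sn _) => /=; lia.
Qed.

Lemma partition_unbeta H : sorted gtn H -> all (fun x => 0 < x) H ->
  is_partition (unbeta H).
Proof.
move=> Hs Hpos; have Hstair := sorted_gtn_staircase Hs Hpos.
apply/andP; split.
- apply/(sortedP 0) => i; rewrite size_unbeta => Hi.
  have := (sortedP 0 Hs) i Hi; have := Hstair i.+1 Hi.
  by rewrite /= !nth_unbeta //; lia.
- apply/(all_nthP 0) => i; rewrite size_unbeta => Hi.
  by rewrite nth_unbeta //; have := Hstair i Hi; lia.
Qed.

(* The 3-runs beta-set {3q+1 : q < a} U {3q+2 : q < b}, listed in decreasing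
   order, and the partition core3 a b it encodes; these are exactly the
   3-cores (core2P below). *)
Definition in_runs a b h :=
  ((h %% 3 == 1) && (h %/ 3 < a)) || ((h %% 3 == 2) && (h %/ 3 < b)).

Definition runs3 a b := rev [seq h <- iota 0 (3 * (a + b) + 3) | in_runs a b h].

Definition core3 a b := unbeta (runs3 a b).

Lemma mem_runs3 a b h : (h \in runs3 a b) = in_runs a b h.
Proof. by rewrite mem_rev mem_filter mem_iota /in_runs; apply/idP/idP; lia. Qed.

Lemma in_runs0 a b q : in_runs a b (3 * q) = false.
Proof. by rewrite /in_runs; apply/negbTE; lia. Qed.

Lemma in_runs1 a b q : in_runs a b (3 * q + 1) = (q < a).
Proof. by rewrite /in_runs; apply/idP/idP; lia. Qed.

Lemma in_runs2 a b q : in_runs a b (3 * q + 2) = (q < b).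
Proof. by rewrite /in_runs; apply/idP/idP; lia. Qed.

Lemma sorted_runs3 a b : sorted gtn (runs3 a b).
Proof.
rewrite rev_sorted.
exact: sub_sorted (sorted_filter ltn_trans _ (iota_ltn_sorted 0 _)).
Qed.

Lemma pos_runs3 a b : all (fun x => 0 < x) (runs3 a b).
Proof. by apply/allP => h; rewrite mem_runs3 /in_runs; lia. Qed.

Lemma beta_core3 a b : beta (core3 a b) = runs3 a b.
Proof. exact: unbetaK (sorted_runs3 a b) (pos_runs3 a b). Qed.

Lemma partition_core3 a b : is_partition (core3 a b).
Proof. exact: partition_unbeta (sorted_runs3 a b) (pos_runs3 a b). Qed.

Definition progression3 c n := [seq 3 * q + c | q <- iota 0 n].

Lemma sumn_progression3 c n :
  sumn (progression3 c n) * 2 + 3 * n = 3 * n * n + 2 * c * n.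
Proof.
elim: n => [|n IH]; first by rewrite /progression3 /= !muln0.
move: IH; rewrite /progression3 -[n.+1]addn1 iotaD map_cat sumn_cat /=; nia.
Qed.

Lemma perm_runs3 a b : perm_eq (runs3 a b) (progression3 1 a ++ progression3 2 b).
Proof.
have inj c : injective (fun q => 3 * q + c) by move=> x y /=; lia.
apply: uniq_perm.
- by rewrite rev_uniq filter_uniq // iota_uniq.
- rewrite cat_uniq !map_inj_uniq ?iota_uniq //= andbT.
  by apply/hasPn => _ /mapP [q _ ->]; apply/mapP => -[q' _]; lia.
move=> h; rewrite mem_runs3 mem_cat; apply/idP/orP.
- rewrite /in_runs => /orP [/andP[/eqP H1 H2] | /andP[/eqP H1 H2]]; [left | right];
    by apply/mapP; exists (h %/ 3); rewrite ?mem_iota; lia.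
- by case=> /mapP [q]; rewrite mem_iota => Hq ->; rewrite /in_runs; lia.
Qed.

(* |core3 a b| = (3a^2 + 3b^2 + 2b - (a+b)^2) / 2 = a^2 - ab + b^2 + b. *)
Lemma psize_core3 a b :
  psize (core3 a b) * 2 + (a + b) * (a + b) = 3 * a * a + 3 * b * b + 2 * b.
Proof.
have := sumn_beta (core3 a b).
rewrite beta_core3 size_unbeta (perm_sumn (perm_runs3 a b)) (perm_size (perm_runs3 a b)).
rewrite sumn_cat size_cat !size_map !size_iota /psize.
by have := sumn_progression3 1 a; have := sumn_progression3 2 b; nia.
Qed.

Lemma leq_mem_sumn (s : seq nat) x : x \in s -> x <= sumn s.
Proof. by elim: s => //= y s IH; rewrite inE => /orP[/eqP-> | /IH]; lia. Qed.

Lemma down_closed_prefix (P : pred nat) :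
  (forall q q', P q -> q' <= q -> P q') -> (exists q, ~~ P q) ->
  exists a, forall q, P q = (q < a).
Proof.
move=> Hdown /ex_minnP [a NPa Hmin]; exists a => q; apply/idP/idP => [Pq | lt_qa].
- by rewrite ltnNge; apply: contra NPa; apply: Hdown Pq.
- by apply: contraTT lt_qa => /Hmin; rewrite -leqNgt.
Qed.

(* Every 3-closed finite set of positive integers is a 3-runs set: in the
   residues 1 and 2 it is down-closed, hence an initial run, and residue 0
   would descend to 0. *)
Lemma closed3_runs H : closed 3 H -> 0 \notin H ->
  exists a b, H =i runs3 a b.
Proof.
move=> Hc H0.
have Hdown r q q' : 3 * q + r \in H -> q' <= q -> 3 * q' + r \in H.
  move=> Hin /subnKC Eq; move: Hin; rewrite -Eq.
  elim: (q - q') => [|d IH]; first by rewrite addn0.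
  move=> Hin; apply: IH; have := Hc _ Hin.
  by rewrite (_ : _ - 3 = 3 * (q' + d) + r); [apply; lia | lia].
have Hfin r : exists q, ~~ (3 * q + r \in H).
  by exists (sumn H).+1; apply/negP => /leq_mem_sumn; lia.
have [a Ha] := down_closed_prefix (Hdown 1) (Hfin 1).
have [b Hb] := down_closed_prefix (Hdown 2) (Hfin 2).
exists a, b => h; rewrite mem_runs3 (divn_eq h 3) mulnC.
have : h %% 3 < 3 by rewrite ltn_mod.
case: (h %% 3) => [|[|[|r]]] // _; rewrite ?in_runs1 ?in_runs2 ?Ha ?Hb //.
rewrite {2}addn0 in_runs0; apply: contraNF H0 => Hin.
by have := Hdown 0 _ 0 Hin (leq0n _); rewrite muln0.
Qed.

Lemma core2P t la :
  is_core2 3 t la <-> exists a b, la = core3 a b /\ closed t (runs3 a b).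
Proof.
split => [/and3P[Hp /(coreP _ Hp) H3 /(coreP _ Hp) Ht] | [a [b [-> Hc]]]].
- have [a [b Hab]] := closed3_runs H3 (zero_notin_beta Hp).
  have E : beta la = runs3 a b.
    apply: (irr_sorted_eq (rev_trans ltn_trans)) => //.
    - exact: ltnn.
    - exact: sorted_beta.
    - exact: sorted_runs3.
  by exists a, b; rewrite /core3 -E betaK.
- have Hp := partition_core3 a b.
  apply/and3P; split; rewrite // coreP // beta_core3 //.
  by move=> h; rewrite !mem_runs3 /in_runs; lia.
Qed.

Lemma core3_inj : injective (fun p : nat * nat => core3 p.1 p.2).
Proof.
move=> [a b] [a' b'] /= E.
have M h : in_runs a b h = in_runs a' b' h by rewrite -!mem_runs3 -!beta_core3 E.
have := M (3 * a + 1); have := M (3 * a' + 1); have := M (3 * b + 2); have := M (3 * b' + 2).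
by rewrite !in_runs1 !in_runs2 !ltnn => *; congr pair; lia.
Qed.

(* For t = 3k + 1 the runs set is t-closed iff a <= k and b <= a + k: the
   critical descents are from 3k + 1 (to 0) and from 3(a + k) + 2 (to 3a + 1). *)
Lemma closed_runs_mod1 k a b :
  closed (3 * k + 1) (runs3 a b) <-> (a < k.+1) && (b < a + k.+1).
Proof.
split => [Hc | /andP[Ha Hb] h]; last by rewrite !mem_runs3 /in_runs; lia.
apply/andP; split; rewrite ltnNge; apply/negP => Hlt.
- have Hin : 3 * k + 1 \in runs3 a b by rewrite mem_runs3 in_runs1.
  by have := Hc _ Hin (leqnn _); rewrite subnn mem_runs3 -(muln0 3) in_runs0.
- have Hin : 3 * (a + k) + 2 \in runs3 a b by rewrite mem_runs3 in_runs2; lia.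
  have Hle : 3 * k + 1 <= 3 * (a + k) + 2 by lia.
  have := Hc _ Hin Hle; rewrite (_ : _ - _ = 3 * a + 1); last lia.
  by rewrite mem_runs3 in_runs1 ltnn.
Qed.

Lemma closed_runs_mod2 k a b :
  closed (3 * k + 2) (runs3 a b) <-> (b < k.+1) && (a < b + k.+2).
Proof.
split => [Hc | /andP[Hb Ha] h]; last by rewrite !mem_runs3 /in_runs; lia.
apply/andP; split; rewrite ltnNge; apply/negP => Hlt.
- have Hin : 3 * k + 2 \in runs3 a b by rewrite mem_runs3 in_runs2; lia.
  by have := Hc _ Hin (leqnn _); rewrite subnn mem_runs3 -(muln0 3) in_runs0.
- have Hin : 3 * (b + k + 1) + 1 \in runs3 a b by rewrite mem_runs3 in_runs1; lia.
  have Hle : 3 * k + 2 <= 3 * (b + k + 1) + 1 by lia.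
  have := Hc _ Hin Hle; rewrite (_ : _ - _ = 3 * b + 2); last lia.
  by rewrite mem_runs3 in_runs2 ltnn.
Qed.

Local Open Scope ring_scope.

Definition core3_size (a b : nat) : rat := a%:R ^+ 2 - a%:R * b%:R + b%:R ^+ 2 + b%:R.

Lemma psize_core3E a b : (psize (core3 a b))%:R = core3_size a b.
Proof.
have := congr1 (fun n => n%:R : rat) (psize_core3 a b).
by rewrite /core3_size /= !natrD !natrM; lra.
Qed.

Lemma sum_iota_antidiff (F G : nat -> rat) N :
  G 0%N = 0 -> (forall n, G n.+1 = G n + F n) -> \sum_(i <- iota 0 N) F i = G N.
Proof.
move=> G0 GS; elim: N => [|N IH]; first by rewrite big_nil G0.
by rewrite -addn1 iotaD big_cat /= big_seq1 IH add0n addn1 GS.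
Qed.

Definition tri n (f : nat -> nat) : seq (nat * nat) :=
  [seq (x, y) | x <- iota 0 n, y <- iota 0 (f x)].

Lemma mem_tri n f x y : ((x, y) \in tri n f) = (x < n)%N && (y < f x)%N.
Proof.
apply/allpairsPdep/andP => [[x' [y' [+ + [-> ->]]]] | [Hx Hy]].
  by rewrite !mem_iota.
by exists x, y; rewrite !mem_iota.
Qed.

Lemma uniq_tri n f : uniq (tri n f).
Proof.
by apply: allpairs_uniq_dep => [|x _|[? ?] [? ?] _ _ [-> ->]]; rewrite ?iota_uniq.
Qed.

Lemma size_tri n f : (size (tri n f))%:R = \sum_(x <- iota 0 n) (f x)%:R :> rat.
Proof.
by rewrite size_allpairs_dep sumnE big_map natr_sum; under eq_bigr do rewrite size_iota.
Qed.

Lemma sum_tri n f (F : nat -> nat -> rat) :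
  \sum_(p <- tri n f) F p.1 p.2 = \sum_(x <- iota 0 n) \sum_(y <- iota 0 (f x)) F x y.
Proof. exact: big_allpairs_dep. Qed.

Definition core_census (t : nat) (pairs : seq (nat * nat)) :=
  [/\ uniq pairs,
      forall a b : nat, (a, b) \in pairs <-> closed t (runs3 a b),
      (size pairs)%:R = (t%:R + 1) * (t%:R + 2) / 6 :> rat
    & \sum_(p <- pairs) core3_size p.1 p.2
        = (t%:R + 4) * (t%:R - 1) * (t%:R + 1) * (t%:R + 2) / 72].

Lemma sum_shifted_iota N c :
  \sum_(x <- iota 0 N) (x + c)%:R = N%:R * (N%:R - 1) / 2 + N%:R * c%:R :> rat.
Proof.
apply: (sum_iota_antidiff (G := fun n => n%:R * (n%:R - 1) / 2 + n%:R * c%:R)).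
  by rewrite !mul0r add0r.
by move=> n; rewrite -addn1 !natrD; field.
Qed.

Definition row_sum (a n : rat) : rat :=
  a ^+ 2 * n - a * n * (n - 1) / 2 + (n - 1) * n * (n + 1) / 3.

Definition col_sum (b n : rat) : rat :=
  (n - 1) * n * (2 * n - 1) / 6 - b * n * (n - 1) / 2 + n * (b ^+ 2 + b).

Lemma sum_row a n : \sum_(b <- iota 0 n) core3_size a b = row_sum a%:R n%:R.
Proof.
apply: (sum_iota_antidiff (G := fun n => row_sum a%:R n%:R)); rewrite /row_sum.
  by field.
by move=> m; rewrite /core3_size -addn1 natrD; field.
Qed.

Lemma sum_col b n : \sum_(a <- iota 0 n) core3_size a b = col_sum b%:R n%:R.
Proof.
apply: (sum_iota_antidiff (G := fun n => col_sum b%:R n%:R)); rewrite /col_sum.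
  by field.
by move=> m; rewrite /core3_size -addn1 natrD; field.
Qed.

Definition rows_total (n x : rat) : rat :=
  - n / 12 + n * x / 12 + 3 * n * x ^+ 2 / 4 + n * x ^+ 3 / 3 - 5 * n ^+ 2 / 24
  + n ^+ 2 * x / 4 + n ^+ 2 * x ^+ 2 / 4 + n ^+ 3 / 12 + n ^+ 3 * x / 3
  + 5 * n ^+ 4 / 24.

Definition cols_total (n x : rat) : rat :=
  - n / 12 + 13 * n * x / 12 + 5 * n * x ^+ 2 / 4 + n * x ^+ 3 / 3 + 7 * n ^+ 2 / 24
  + 3 * n ^+ 2 * x / 4 + n ^+ 2 * x ^+ 2 / 4 + 7 * n ^+ 3 / 12 + n ^+ 3 * x / 3
  + 5 * n ^+ 4 / 24.

Lemma sum_rows N k :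
  \sum_(a <- iota 0 N) row_sum a%:R (a + k.+1)%:R = rows_total N%:R k%:R.
Proof.
apply: (sum_iota_antidiff (G := fun n => rows_total n%:R k%:R)) => [|m].
  by rewrite /rows_total; field.
by rewrite /row_sum /rows_total -[m.+1]addn1 -[k.+1]addn1 !natrD; field.
Qed.

Lemma sum_cols N k :
  \sum_(b <- iota 0 N) col_sum b%:R (b + k.+2)%:R = cols_total N%:R k%:R.
Proof.
apply: (sum_iota_antidiff (G := fun n => cols_total n%:R k%:R)) => [|m].
  by rewrite /cols_total; field.
by rewrite /col_sum /cols_total -[m.+1]addn1 -[k.+2]addn2 !natrD; field.
Qed.

Lemma census_mod1 k : core_census (3 * k + 1) (tri k.+1 (fun a => a + k.+1)).
Proof.
split.
- exact: uniq_tri.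
- by move=> a b; rewrite mem_tri; exact: iff_sym (closed_runs_mod1 k a b).
- by rewrite size_tri sum_shifted_iota -[k.+1]addn1 !natrD; field.
- rewrite sum_tri; under eq_bigr do rewrite sum_row.
  by rewrite sum_rows /rows_total -[k.+1]addn1 !natrD; field.
Qed.

Lemma census_mod2 k :
  core_census (3 * k + 2) (map swap_pair (tri k.+1 (fun b => b + k.+2))).
Proof.
split.
- by rewrite (map_inj_uniq (can_inj swap_pairK)) uniq_tri.
- move=> a b; rewrite (mem_map (can_inj swap_pairK) _ (b, a)) mem_tri.
  exact: iff_sym (closed_runs_mod2 k a b).
- by rewrite size_map size_tri sum_shifted_iota -[k.+1]addn1 !natrD; field.
- rewrite big_map (sum_tri _ _ (fun b a => core3_size a b)).
  under eq_bigr do rewrite sum_col.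
  by rewrite sum_cols /cols_total -[k.+1]addn1 !natrD; field.
Qed.

Lemma census_exists t : ~~ (3 %| t)%N -> exists pairs, core_census t pairs.
Proof.
move=> t_ndiv; rewrite (divn_eq t 3) mulnC.
have : (t %% 3 < 3)%N by rewrite ltn_mod.
move: t_ndiv; rewrite /dvdn; case: (t %% 3)%N => [|[|[|r]]] // _ _.
- by eexists; exact: census_mod1.
- by eexists; exact: census_mod2.
Qed.

Lemma binom3 m : ('C(m + 3, 3))%:R = (m%:R + 3) * (m%:R + 2) * (m%:R + 1) / 6 :> rat.
Proof.
have := congr1 (fun n => n%:R : rat) (bin_ffact (m + 3) 3).
rewrite addn3 !ffactSS ffactn0 muln1 (_ : 3`! = 6)%N //= !natrM.
by rewrite -[m.+3]addn3 -[m.+2]addn2 -[m.+1]addn1 !natrD => E; lra.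
Qed.

Theorem proposition1p3 (t : nat) (t_pos : (0 < t)%N) (t_ndiv : ~~ (3 %| t)%N) :
  exists L : seq (seq nat),
    [/\ uniq L,
        (forall la : seq nat, la \in L = is_core2 3 t la),
        ((sumn (map psize L))%:R / (size L)%:R : rat)
          = ((t + 4) * 2 * (t - 1))%:R / 24%:R
      & ((sumn (map psize L))%:R : rat)
          = ((t + 4) * 2 * (t - 1))%:R / (24 * (t + 3))%:R * ('C(t + 3, 3))%:R].
Proof.
have [pairs [uniq_pairs mem_pairs size_pairs sum_pairs]] := census_exists t_ndiv.
pose L := [seq core3 p.1 p.2 | p <- pairs].
have sumL : (sumn (map psize L))%:R = \sum_(p <- pairs) core3_size p.1 p.2 :> rat.
  by rewrite sumnE !big_map natr_sum; under eq_bigr do rewrite psize_core3E.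
have t_cast : ((t + 4) * 2 * (t - 1))%:R = (t%:R + 4) * 2 * (t%:R - 1) :> rat.
  by rewrite !natrM natrB // !natrD.
have t_ge0 : 0 <= t%:R :> rat := ler0n _ _.
exists L; split.
- by rewrite (map_inj_uniq core3_inj).
- move=> la; apply/mapP/idP => [[[a b] /mem_pairs Hab ->] | /core2P [a [b [-> Hab]]]].
    by apply/core2P; exists a, b.
  by exists (a, b) => //; apply/mem_pairs.
- rewrite sumL size_map sum_pairs size_pairs t_cast.
  by field; apply/andP; split; apply: lt0r_neq0; lra.
- rewrite sumL sum_pairs t_cast binom3 natrM natrD.
  by field; apply: lt0r_neq0; lra.
Qed.
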